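(* Let $\mathcal{H}$ be a real or complex Hilbert space and let $S:\mathcal{H}\to\mathcal{H}$ be a (not necessarily densely defined) linear operator such that $\operatorname{ran}(S\cap S^* )=\mathcal{H}$. Then $S$ is densely defined and self-adjoint.
   Context: Operators are identified with their graphs. For a linear relation $R\subset\mathcal{H}\times\mathcal{H}$ its adjoint is the linear relation $R^*=\{(k',h'):\langle k,k'\rangle=\langle h,h'\rangle\ \forall (h,k)\in R\}$ (possibly multivalued when $R$ is not densely defined). $S\cap S^*$ is the intersection of the graph of $S$ with $S^*$, and $\operatorname{ran}$ denotes its range (set of second coordinates). *)

From mathcomp Require Import all_boot all_algebra.
From mathcomp Require Import reals complex.
Import GRing.Theory Num.Theory.
Set Implicit Arguments.
Unset Strict Implicit.
Local Open Scope ring_scope.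

(* Inner product spaces / Hilbert spaces over a number field K with a given
   conjugation [conj] (identity for real scalars, complex conjugation for
   complex scalars).  Convention: linear in the first argument. *)
Definition inner_product_space (K : numFieldType) (conj : K -> K)
    (V : lmodType K) (ip : V -> V -> K) : Prop :=
  [/\ (forall (a : K) (x y z : V), ip (a *: x + y) z = a * ip x z + ip y z),
      (forall x y : V, ip y x = conj (ip x y)),
      (forall x : V, 0 <= ip x x)
    & (forall x : V, ip x x = 0 -> x = 0)].

Definition sqnorm (K : numFieldType) (V : lmodType K) (ip : V -> V -> K)
    (x : V) : K := `|ip x x|.

Definition ip_cauchy (K : numFieldType) (V : lmodType K) (ip : V -> V -> K)
    (u : nat -> V) : Prop :=
  forall e : K, 0 < e -> exists N : nat, forall m n : nat,
    (N <= m)%N -> (N <= n)%N -> sqnorm ip (u m - u n) < e.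

Definition ip_converges (K : numFieldType) (V : lmodType K) (ip : V -> V -> K)
    (u : nat -> V) (l : V) : Prop :=
  forall e : K, 0 < e -> exists N : nat, forall n : nat,
    (N <= n)%N -> sqnorm ip (u n - l) < e.

Definition hilbert_space (K : numFieldType) (conj : K -> K)
    (V : lmodType K) (ip : V -> V -> K) : Prop :=
  inner_product_space conj ip /\
  (forall u : nat -> V, ip_cauchy ip u -> exists l : V, ip_converges ip u l).

(* Linear relations in V x V, identified with graphs *)
Definition linear_relation (K : numFieldType) (V : lmodType K)
    (R : V -> V -> Prop) : Prop :=
  [/\ R 0 0,
      (forall h k h' k', R h k -> R h' k' -> R (h + h') (k + k'))
    & (forall (a : K) h k, R h k -> R (a *: h) (a *: k))].

(* (graph of) a linear operator, with arbitrary (not necessarily dense) domain *)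
Definition linear_operator (K : numFieldType) (V : lmodType K)
    (S : V -> V -> Prop) : Prop :=
  linear_relation S /\ (forall h k k', S h k -> S h k' -> k = k').

Definition adjoint (K : numFieldType) (V : lmodType K) (ip : V -> V -> K)
    (R : V -> V -> Prop) : V -> V -> Prop :=
  fun k' h' => forall h k, R h k -> ip k k' = ip h h'.

Definition rel_cap (V : Type) (R1 R2 : V -> V -> Prop) : V -> V -> Prop :=
  fun h k => R1 h k /\ R2 h k.

Definition rel_dom (V : Type) (R : V -> V -> Prop) : V -> Prop :=
  fun h => exists k, R h k.

Definition rel_ran (V : Type) (R : V -> V -> Prop) : V -> Prop :=
  fun k => exists h, R h k.

Definition ip_dense (K : numFieldType) (V : lmodType K) (ip : V -> V -> K)
    (D : V -> Prop) : Prop :=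
  forall (x : V) (e : K), 0 < e -> exists d : V, D d /\ sqnorm ip (x - d) < e.

Definition self_adjoint (K : numFieldType) (V : lmodType K) (ip : V -> V -> K)
    (S : V -> V -> Prop) : Prop :=
  forall h k, S h k <-> adjoint ip S h k.

From HB Require Import structures.
From mathcomp Require Import all_boot all_algebra.
From mathcomp Require Import reals complex.
From mathcomp Require Import ring lra.
From mathcomp Require Import boolp classical_sets order.
Import Order.TTheory GRing.Theory Num.Theory.
Set Implicit Arguments.
Unset Strict Implicit.
Local Open Scope ring_scope.
Local Open Scope classical_set_scope.

(* Both S and S^* are onto, since S ∩ S^* is.  If S^* is onto then S is
   injective, and if S is onto then S^* is injective, because <.,.> separates
   points; as every k is the image of one g under both S and S^*, this gives
   S = S^*.  A vector orthogonal to dom S is then in S^*(0) = S(0) = 0.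
   Finally, a subspace M of a real Hilbert space with trivial orthogonal
   complement is dense: a minimizing sequence for the distance from x to M is
   Cauchy by the parallelogram law, and its limit p satisfies x - p ⊥ M by
   the first-order condition, so p = x.  The complex case reduces to the real
   one through the real inner product Re <.,.>. *)

Definition subspace (K : numFieldType) (V : lmodType K) (M : V -> Prop) : Prop :=
  [/\ M 0, (forall a b, M a -> M b -> M (a + b))
    & (forall (t : K) a, M a -> M (t *: a))].

Definition ortho_trivial (K : numFieldType) (V : lmodType K) (ip : V -> V -> K)
    (M : V -> Prop) : Prop :=
  forall y, (forall d, M d -> ip d y = 0) -> y = 0.

Lemma rel_dom_subspace (K : numFieldType) (V : lmodType K) (S : V -> V -> Prop) :
  linear_relation S -> subspace (rel_dom S).
Proof.
case=> S00 SD SZ; split; first by exists 0.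
- by move=> a b [k Sak] [k' Sbk']; exists (k + k'); apply: SD.
- by move=> t a [k Sak]; exists (t *: k); apply: SZ.
Qed.

Section InnerProduct.
Variables (K : numFieldType) (conj : K -> K) (V : lmodType K) (ip : V -> V -> K).
Hypothesis ipV : inner_product_space conj ip.

Lemma ip0l z : ip 0 z = 0.
Proof.
case: ipV => ipL _ _ _; have := ipL 1 0 0 z.
by rewrite scaler0 addr0 mul1r -{1}[ip 0 z]addr0 => /addrI.
Qed.

Lemma ipZl a x z : ip (a *: x) z = a * ip x z.
Proof. by case: ipV => ipL _ _ _; rewrite -[a *: x]addr0 ipL ip0l addr0. Qed.

Lemma ipDl x y z : ip (x + y) z = ip x z + ip y z.
Proof. by case: ipV => ipL _ _ _; rewrite -{1}[x]scale1r ipL mul1r. Qed.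

Lemma ipBl x y z : ip (x - y) z = ip x z - ip y z.
Proof. by rewrite ipDl -scaleN1r ipZl mulN1r. Qed.

Lemma ip0r z : ip z 0 = 0.
Proof.
case: ipV => _ ipS _ _.
by rewrite ipS ip0l; have := ipS 0 0; rewrite ip0l.
Qed.

Lemma ip_injl x y : (forall z, ip x z = ip y z) -> x = y.
Proof.
case: ipV => _ _ _ ipD eq_xy; apply/eqP; rewrite -subr_eq0; apply/eqP/ipD.
by rewrite ipBl eq_xy subrr.
Qed.

Lemma adjoint_onto_inj (S : V -> V -> Prop) h g k :
  (forall b, rel_ran (adjoint ip S) b) -> S h k -> S g k -> h = g.
Proof.
move=> onto Shk Sgk; apply: ip_injl => b; have [a Aab] := onto b.
by rewrite -(Aab _ _ Shk) (Aab _ _ Sgk).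
Qed.

Lemma onto_adjoint_inj (S : V -> V -> Prop) u g v :
  (forall k, rel_ran S k) -> adjoint ip S u v -> adjoint ip S g v -> u = g.
Proof.
case: ipV => _ ipS _ _ onto Auv Agv; apply: ip_injl => k; have [h Shk] := onto k.
by rewrite ipS [ip g k]ipS (Auv _ _ Shk) (Agv _ _ Shk).
Qed.

Lemma self_adjoint_of_ran_cap (S : V -> V -> Prop) :
  (forall k, rel_ran (rel_cap S (adjoint ip S)) k) -> self_adjoint ip S.
Proof.
move=> onto; have ranS b : rel_ran S b by have [a [? _]] := onto b; exists a.
have ranA b : rel_ran (adjoint ip S) b by have [a [_ ?]] := onto b; exists a.
move=> h k; have [g [Sgk Agk]] := onto k; split=> [Shk | Ahk].
- by rewrite (adjoint_onto_inj ranA Shk Sgk).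
- by rewrite (onto_adjoint_inj ranS Ahk Agk).
Qed.

Lemma self_adjoint_dom_ortho_trivial (S : V -> V -> Prop) :
  linear_operator S -> self_adjoint ip S -> ortho_trivial ip (rel_dom S).
Proof.
move=> [[S00 _ _] Sfun] Sadj y ortho_y; apply: (Sfun 0) => //; apply/Sadj => h k Shk.
by rewrite ip0r ortho_y //; exists k.
Qed.

End InnerProduct.

Section RealInnerProduct.
Variables (R : realFieldType) (V : lmodType R) (ip : V -> V -> R).
Hypothesis ipV : inner_product_space (fun x : R => x) ip.

Lemma ip_sym x y : ip x y = ip y x.
Proof. by case: ipV. Qed.

Lemma ip_ge0 x : 0 <= ip x x.
Proof. by case: ipV. Qed.

Lemma sqnorm_ip x : sqnorm ip x = ip x x.
Proof. exact/ger0_norm/ip_ge0. Qed.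

Lemma ip_lincomb s t a b :
  ip (s *: a + t *: b) (s *: a + t *: b)
  = s ^+ 2 * ip a a + 2 * s * t * ip a b + t ^+ 2 * ip b b.
Proof.
rewrite !(ipDl ipV) ![ip _ (_ + _)]ip_sym !(ipDl ipV) !(ipZl ipV).
rewrite ![ip _ (_ *: _)]ip_sym !(ipZl ipV) [ip b a]ip_sym; ring.
Qed.

Lemma ip_scale s a : ip (s *: a) (s *: a) = s ^+ 2 * ip a a.
Proof. by rewrite !(ipZl ipV) ip_sym (ipZl ipV) mulrA -expr2. Qed.

Lemma ip_opp a : ip (- a) (- a) = ip a a.
Proof. by rewrite -scaleN1r ip_scale sqrrN expr1n mul1r. Qed.

Lemma parallelogram a b :
  ip (a + b) (a + b) + ip (a - b) (a - b) = 2 * ip a a + 2 * ip b b.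
Proof.
have -> : a + b = 1 *: a + 1 *: b by rewrite !scale1r.
have -> : a - b = 1 *: a + (-1) *: b by rewrite scale1r scaleN1r.
by rewrite !ip_lincomb; ring.
Qed.

Lemma near_minimizer_ip a d e :
  (forall t, ip a a <= ip (a - t *: d) (a - t *: d) + e) ->
  ip a d ^+ 2 <= e * ip d d.
Proof.
move=> near_min; have [d0 | d_neq0] := eqVneq (ip d d) 0.
  by case: ipV => _ _ _ /(_ d d0) ->; rewrite !(ip0r ipV) expr0n mulr0.
have d_gt0 : 0 < ip d d by rewrite lt_def d_neq0 ip_ge0.
pose t := ip a d / ip d d; have tD : t * ip d d = ip a d by rewrite mulfVK.
have := near_min t; rewrite -[a in a - _]scale1r -scaleNr ip_lincomb => h.
nra.
Qed.

Lemma cauchy_schwarz a b : ip a b ^+ 2 <= ip a a * ip b b.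
Proof.
by apply: near_minimizer_ip => t; rewrite lerDr ip_ge0.
Qed.

End RealInnerProduct.

Definition tol (R : realType) (n : nat) : R := (n.+1%:R)^-1.

Lemma tol_gt0 (R : realType) n : 0 < tol R n.
Proof. by rewrite invr_gt0. Qed.

Lemma tol_lt (R : realType) (e : R) :
  0 < e -> exists N, forall n, (N <= n)%N -> tol R n < e.
Proof.
move=> e_gt0; exists (Num.Def.truncn e^-1) => n le_Nn.
rewrite -[e]invrK ltf_pV2 ?posrE ?invr_gt0 ?ltr0Sn //.
by apply: lt_le_trans (truncnS_gt _) _; rewrite ler_nat ltnS.
Qed.

Definition minimizing (R : realType) (V : lmodType R) (ip : V -> V -> R)
    (M : V -> Prop) (x : V) (u : nat -> V) : Prop :=
  forall n, M (u n) /\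
    forall d, M d -> ip (x - u n) (x - u n) <= ip (x - d) (x - d) + tol R n.

Section Projection.
Variables (R : realType) (V : lmodType R) (ip : V -> V -> R) (M : V -> Prop).
Hypotheses (hilbV : hilbert_space (fun x : R => x) ip) (subM : subspace M).
Let ipV : inner_product_space (fun x : R => x) ip := proj1 hilbV.

Lemma minimizing_exists x : exists u, minimizing ip M x u.
Proof.
have [M0 _ _] := subM.
pose D := [set ip (x - d) (x - d) | d in M].
have D_inf : has_inf D.
  split; first by exists (ip (x - 0) (x - 0)); exists 0.
  by exists 0 => _ [d _ <-]; exact: ip_ge0.
have approx n : exists d, M d /\ ip (x - d) (x - d) < inf D + tol R n.
  by have [_ [d Md <-] lt_d] := inf_adherent (tol_gt0 R n) D_inf; exists d.
have [u approx_u] := choice approx; exists u => n.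
have [Mun lt_un] := approx_u n; split => // d Md.
apply/ltW/(lt_le_trans lt_un); rewrite lerD2r.
by apply: ge_inf; [case: D_inf | exists d].
Qed.

Section Minimizing.
Variables (x : V) (u : nat -> V).
Hypothesis u_min : minimizing ip M x u.

Lemma minimizing_cauchy : ip_cauchy ip u.
Proof.
move=> e e_gt0; have [N ltN] := tol_lt (divr_gt0 e_gt0 (ltr0Sn R 3)).
exists N => m n le_Nm le_Nn; rewrite sqnorm_ip //.
have [[Mum min_m] [Mun min_n]] := (u_min m, u_min n).
pose w := 2^-1 *: (u m + u n).
have Mw : M w by case: subM => _ MD MZ; apply/MZ/MD.
have mid : x - w = 2^-1 *: ((x - u n) + (x - u m)).
  rewrite addrACA -opprD [u n + _]addrC scalerBr -mulr2n -scaler_nat scalerA.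
  by rewrite mulVf ?pnatr_eq0 // scale1r.
have := parallelogram ipV (x - u n) (x - u m).
have -> : x - u n - (x - u m) = u m - u n by rewrite opprB addrC subrKA.
have := min_m w Mw; have := min_n w Mw; rewrite mid ip_scale //.
have := ltN m le_Nm; have := ltN n le_Nn; rewrite expr2; lra.
Qed.

Lemma minimizing_limit_orth p :
  ip_converges ip u p -> forall d, M d -> ip (x - p) d = 0.
Proof.
move=> u_p d Md; set c := ip (x - p) d; have d_ge0 := ip_ge0 ipV d.
have c_small e : 0 < e -> c ^+ 2 <= 4 * e * ip d d.
  move=> e_gt0; have [N1 ltN1] := tol_lt e_gt0.
  have [N2 ltN2] := u_p e e_gt0; pose n := maxn N1 N2.
  have near_n : ip (x - u n) d ^+ 2 <= tol R n * ip d d.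
    apply: near_minimizer_ip => // t; have [Mun min_n] := u_min n.
    rewrite -addrA -opprD; apply: min_n.
    by case: subM => _ MD MZ; apply/MD/MZ.
  have close_n := cauchy_schwarz ipV (u n - p) d.
  have -> : c = ip (x - u n) d + ip (u n - p) d.
    by rewrite -(ipDl ipV) addrA subrK.
  have tol_n : tol R n * ip d d <= e * ip d d.
    by rewrite ler_wpM2r // ltW // ltN1 // leq_maxl.
  have dist_n : ip (u n - p) (u n - p) * ip d d <= e * ip d d.
    by rewrite ler_wpM2r // ltW // -sqnorm_ip // ltN2 // leq_maxr.
  have := sqr_ge0 (ip (x - u n) d - ip (u n - p) d); nra.
apply/eqP; rewrite -sqrf_eq0 eq_le sqr_ge0 andbT; apply/ler_addgt0Pr => e e_gt0.
have k_gt0 : 0 < 4 * ip d d + 1 by lra.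
have := c_small _ (divr_gt0 e_gt0 k_gt0); have := mulfVK (lt0r_neq0 k_gt0) e.
have := divr_gt0 e_gt0 k_gt0; move: (e / _) => f; nra.
Qed.

End Minimizing.

Lemma ortho_trivial_dense : ortho_trivial ip M -> ip_dense ip M.
Proof.
move=> Mperp x e e_gt0; have [u u_min] := minimizing_exists x.
have [p u_p] := proj2 hilbV u (minimizing_cauchy u_min).
have -> : x = p.
  apply/eqP; rewrite -subr_eq0; apply/eqP/Mperp => d Md.
  by rewrite (ip_sym ipV); apply: minimizing_limit_orth.
have [N ltN] := u_p e e_gt0; exists (u N); split; first by case: (u_min N).
by rewrite sqnorm_ip // -opprB ip_opp // -sqnorm_ip //; apply: ltN.
Qed.

End Projection.

Definition realified (R : realType) (V : lmodType R[i]) : Type := V.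

Section Realified.
Variables (R : realType) (V : lmodType R[i]).

HB.instance Definition _ := GRing.Zmodule.on (realified V).

Definition realified_scale (a : R) (v : realified V) : realified V :=
  (a%:C)%C *: (v : V).

Lemma realified_scaleA a b v :
  realified_scale a (realified_scale b v) = realified_scale (a * b) v.
Proof. by rewrite /realified_scale scalerA rmorphM. Qed.

Lemma realified_scale1 : left_id 1 realified_scale.
Proof. by move=> v; rewrite /realified_scale rmorph1 scale1r. Qed.

Lemma realified_scaleDr : right_distributive realified_scale +%R.
Proof. by move=> a u v; rewrite /realified_scale scalerDr. Qed.

Lemma realified_scaleDl v : {morph realified_scale^~ v : a b / a + b}.
Proof. by move=> a b; rewrite /realified_scale rmorphD scalerDl. Qed.

HB.instance Definition _ :=
  GRing.Zmodule_isLmodule.Build R (realified V) realified_scaleA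
    realified_scale1 realified_scaleDr realified_scaleDl.

Lemma subspace_realified (M : V -> Prop) :
  subspace M -> subspace (M : realified V -> Prop).
Proof. by case=> M0 MD MZ; split=> // t a /(MZ (t%:C)%C). Qed.

End Realified.

Section ComplexInnerProduct.
Variables (R : realType) (V : lmodType R[i]) (ip : V -> V -> R[i]).

Definition re_ip (x y : realified V) : R := complex.Re (ip x y).

Lemma ReD (u v : R[i]) : complex.Re (u + v) = complex.Re u + complex.Re v.
Proof. by case: u; case: v. Qed.

Lemma Re_realM (a : R) (w : R[i]) : complex.Re ((a%:C)%C * w) = a * complex.Re w.
Proof. by case: w => b c; simpc. Qed.

Lemma Re_conj (w : R[i]) : complex.Re (Num.conj w) = complex.Re w.
Proof. by case: w. Qed.

Lemma ge0_RRe (z : R[i]) : 0 <= z -> (complex.Re z)%:C%C = z.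
Proof. by move=> /ger0_real /RRe_real. Qed.

Lemma ltc_Re (r : R) (e : R[i]) : 0 < e -> ((r%:C)%C < e) = (r < complex.Re e).
Proof. by move=> /ltW e_ge0; rewrite ltcE (ger0_Im e_ge0) eqxx. Qed.

Lemma Re_gt0 (e : R[i]) : 0 < e -> 0 < complex.Re e.
Proof. by rewrite ltcE => /andP[]. Qed.

Hypothesis ipV : inner_product_space (@Num.conj R[i]) ip.

Lemma Re_ip_ge0 x : 0 <= complex.Re (ip x x).
Proof. by case: ipV => _ _ /(_ x); rewrite lecE => /andP[]. Qed.

Lemma re_ip_inner_product : inner_product_space (fun x : R => x) re_ip.
Proof.
case: ipV => ipL ipS ipP ipD; split.
- by move=> a x y z; rewrite /re_ip ipL ReD Re_realM.
- by move=> x y; rewrite /re_ip ipS Re_conj.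
- exact: Re_ip_ge0.
- by move=> x Re0; apply: ipD; rewrite -[ip x x]ge0_RRe // [complex.Re _]Re0.
Qed.

Lemma sqnorm_re_ip v : sqnorm ip v = (sqnorm re_ip v)%:C%C.
Proof.
by case: ipV => _ _ ipP _; rewrite /sqnorm /re_ip !ger0_norm ?Re_ip_ge0 ?ge0_RRe.
Qed.

Lemma re_ip_ortho_trivial (M : V -> Prop) :
  subspace M -> ortho_trivial ip M -> ortho_trivial re_ip M.
Proof.
case=> _ _ MZ Mperp y re_perp; apply: Mperp => d Md.
have Re0 : complex.Re (ip d y) = 0 by apply: re_perp.
have Im0 : complex.Im (ip d y) = 0.
  have := re_perp _ (MZ 'i%C _ Md); rewrite /re_ip (ipZl ipV) mulrC ReiNIm.
  by move/eqP; rewrite oppr_eq0 => /eqP.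
by move: Re0 Im0; case: (ip d y) => a b /= -> ->.
Qed.

Lemma re_ip_hilbert :
  (forall u, ip_cauchy ip u -> exists l, ip_converges ip u l) ->
  hilbert_space (fun x : R => x) re_ip.
Proof.
move=> complete; split=> [|u u_cauchy]; first exact: re_ip_inner_product.
have [l u_l] : exists l, ip_converges ip u l.
  apply: complete => e e_gt0; have [N u_N] := u_cauchy _ (Re_gt0 e_gt0).
  by exists N => m n le_Nm le_Nn; rewrite sqnorm_re_ip ltc_Re // u_N.
exists l => e e_gt0; have eC_gt0 : 0 < (e%:C)%C by rewrite ltcR.
have [N u_N] := u_l _ eC_gt0.
by exists N => n le_Nn; move: (u_N n le_Nn); rewrite sqnorm_re_ip ltc_Re.
Qed.

Lemma re_ip_dense (M : V -> Prop) : ip_dense re_ip M -> ip_dense ip M.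
Proof.
move=> M_dense x e e_gt0; have [d [Md close_d]] := M_dense x _ (Re_gt0 e_gt0).
by exists d; rewrite sqnorm_re_ip ltc_Re.
Qed.

End ComplexInnerProduct.

Lemma complex_ortho_trivial_dense (R : realType) (V : lmodType R[i])
    (ip : V -> V -> R[i]) (M : V -> Prop) :
  hilbert_space (@Num.conj R[i]) ip -> subspace M -> ortho_trivial ip M ->
  ip_dense ip M.
Proof.
move=> hilbV subM Mperp; have ipV := proj1 hilbV.
apply: (re_ip_dense ipV); apply: (ortho_trivial_dense (re_ip_hilbert ipV (proj2 hilbV))).
  exact: subspace_realified.
exact (re_ip_ortho_trivial ipV subM Mperp).
Qed.

Theorem corollary3p6 (R : realType) :
  (forall (V : lmodType R) (ip : V -> V -> R) (S : V -> V -> Prop),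
      hilbert_space (fun x : R => x) ip ->
      linear_operator S ->
      (forall k : V, rel_ran (rel_cap S (adjoint ip S)) k) ->
      ip_dense ip (rel_dom S) /\ self_adjoint ip S)
  /\
  (forall (V : lmodType R[i]) (ip : V -> V -> R[i]) (S : V -> V -> Prop),
      hilbert_space (@Num.conj R[i]) ip ->
      linear_operator S ->
      (forall k : V, rel_ran (rel_cap S (adjoint ip S)) k) ->
      ip_dense ip (rel_dom S) /\ self_adjoint ip S).
Proof.
split=> V ip S hilbV Sop Sran; have ipV := proj1 hilbV;
  have Sadj := self_adjoint_of_ran_cap ipV Sran;
  have Sperp := self_adjoint_dom_ortho_trivial ipV Sop Sadj;
  have subS := rel_dom_subspace (proj1 Sop).
- by split=> //; apply: ortho_trivial_dense.
- by split=> //; apply: complex_ortho_trivial_dense.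
Qed.
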